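(* Let $f=f_1\wedge\dots\wedge f_r\in\wedge^rS_m$, let $w=(w_0,\dots,w_n)\in\mathbb Z^{n+1}$ be a weight vector with $w_0>w_1>\dots>w_n$ which distinguishes monomials in degree $rm$, and for $t\neq0$ let $\lambda(t)$ be the diagonal matrix with diagonal entries $t^{-w_0},\dots,t^{-w_n}$. Let $h\in\mathrm{GL}(n+1,K)$ be upper-triangular and let $g\in U(f)$. Then for every integer $N$, $$\operatorname{supp}\big(h\cdot(\lambda(t)gf)_{\ge N}\big)=\operatorname{supp}\big((\lambda(t)gf)_{\ge N}\big)$$ for all but finitely many $t\in K\setminus\{0\}$.
   Context: $K$ algebraically closed of characteristic $0$, $S=K[x_0,\dots,x_n]$, $S_m$ its degree-$m$ part; $g=(a_{ij})\in\mathrm{GL}(n+1,K)$ acts on $S$ by $x_i\mapsto\sum_ja_{ji}x_j$, and on $\wedge^rS_m$ by $g(f_1\wedge\dots\wedge f_r)=gf_1\wedge\dots\wedge gf_r$. A state is a wedge product $\mathbf x^{B_1}\wedge\dots\wedge\mathbf x^{B_r}$ of $r$ pairwise distinct degree-$m$ monomials; two states are equivalent if they differ by a reordering (hence by a sign). Every $F\in\wedge^rS_m$ is uniquely a linear combination of states (one representative per equivalence class); $\operatorname{supp}(F)$ is the set of states occurring with nonzero coefficient. The weight of the state (and of the corresponding term) is $w\cdot(B_1+\dots+B_r)$. For an integer $N$, $F_{\ge N}$ is the sum of the terms of $F$ of weight $\ge N$. A weight vector $w$ distinguishes monomials in degree $d$ if $w\cdot A\neq w\cdot B$ for all distinct $A,B\in\mathbb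 N^{n+1}$ of degree $d$. $U(f)$: let $G$ be the $(n+1)\times(n+1)$ matrix of indeterminates $G_{ij}$ and expand $Gf$ as a linear combination of states with coefficients polynomials in the $G_{ij}$; $U(f)\subseteq\mathrm{GL}(n+1,K)$ is the open set where none of those coefficient polynomials that are not identically zero vanish. *)

From HB Require Import structures.
From mathcomp Require Import all_boot all_order all_algebra.
From mathcomp Require Import mpoly.
Import GRing.Theory.
Local Open Scope ring_scope.

(* Polynomial ring S = K[x_0,...,x_n] is {mpoly K[n.+1]}; variable x_i is 'X_i. *)

Definition mon (n m : nat) :=
  {A : {ffun 'I_n.+1 -> 'I_m.+1} | (\sum_i (A i : nat) == m)%N}.

Definition mnm_of {n m : nat} (A : mon n m) : 'X_{1..n.+1} :=
  [multinom (val A i : nat) | i < n.+1].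

(* A state = an equivalence class of wedges of r pairwise distinct degree-m
   monomials, i.e. an r-element set of such monomials. *)
Definition state (n m r : nat) := {S : {set mon n m} | #|S| == r}.

Definition st_mon {n m r : nat} (S : state n m r) (j : 'I_r) : mon n m :=
  enum_val (cast_ord (esym (eqP (valP S))) j).

(* An element of wedge^r S_m (with coefficients in R) is encoded by its
   coefficients on states, each state being represented by the wedge of its
   monomials in the order given by st_mon. *)
Definition ext (R : Type) (n m r : nat) := state n m r -> R.

(* Coefficients of f_1 /\ ... /\ f_r (f_i in S_m): expanding by multilinearity,
   the coefficient on the state S is the r x r minor det(coef of x^{S_j} in f_i). *)
Definition wedge {R : comNzRingType} {n : nat} (m : nat) {r : nat} (f : 'I_r -> {mpoly R[n.+1]})
  : ext R n m r :=
  fun S => \det (\matrix_(i < r, j < r) (f i)@_(mnm_of (st_mon S j))).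

Definition act {R : comNzRingType} {n : nat} (g : 'M[R]_n.+1)
  (p : {mpoly R[n.+1]}) : {mpoly R[n.+1]} :=
  comp_mpoly [tuple \sum_(j < n.+1) g j i *: 'X_j | i < n.+1] p.

(* Linear action on wedge^r S_m: g(e_S) = g x^{S_1} /\ ... /\ g x^{S_r}. *)
Definition act_ext {R : comNzRingType} {n m r : nat} (g : 'M[R]_n.+1)
  (F : ext R n m r) : ext R n m r :=
  fun C => \sum_(S : state n m r)
     F S * wedge m (fun i => act g 'X_[mnm_of (st_mon S i)]) C.

Definition mwt {n : nat} (w : 'I_n.+1 -> int) (A : 'X_{1..n.+1}) : int :=
  \sum_i w i * (A i)%:Z.

Definition swt {n m r : nat} (w : 'I_n.+1 -> int) (S : state n m r) : int :=
  \sum_(B in val S) mwt w (mnm_of B).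

Definition trunc {R : nzRingType} {n m r : nat} (w : 'I_n.+1 -> int) (N : int)
  (F : ext R n m r) : ext R n m r :=
  fun S => if N <= swt w S then F S else 0.

Definition supp {R : nzRingType} {n m r : nat} (F : ext R n m r)
  : {set state n m r} := [set S | F S != 0].

Definition distinguishes {n : nat} (w : 'I_n.+1 -> int) (d : nat) : Prop :=
  forall A B : 'X_{1..n.+1}, mdeg A = d -> mdeg B = d -> A != B ->
    mwt w A != mwt w B.

Definition lam {K : fieldType} {n : nat} (w : 'I_n.+1 -> int) (t : K)
  : 'M[K]_n.+1 := diag_mx (\row_i t ^ (- w i)).

(* The generic matrix G = (G_ij) of indeterminates, in the polynomial ring
   K[G_ij] = {mpoly K[(n+1)*(n+1)]}, G_ij being the variable mxvec_index i j. *)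
Definition genmx (K : fieldType) (n : nat)
  : 'M[{mpoly K[(n.+1 * n.+1)%N]}]_n.+1 :=
  \matrix_(i, j) 'X_(mxvec_index i j).

Definition coefpoly {K : fieldType} {n : nat} (m : nat) {r : nat} (f : 'I_r -> {mpoly K[n.+1]})
  : ext {mpoly K[(n.+1 * n.+1)%N]} n m r :=
  wedge m (fun i => act (genmx K n) (map_mpoly (fun c : K => c%:MP) (f i))).

Definition inU {K : fieldType} {n : nat} (m : nat) {r : nat} (f : 'I_r -> {mpoly K[n.+1]})
  (g : 'M[K]_n.+1) : Prop :=
  g \in unitmx /\
  forall S : state n m r, coefpoly m f S != 0 ->
    (coefpoly m f S).@[fun k => mxvec g 0 k] != 0.

From Pilot Require Import Defs.
From HB Require Import structures.
From mathcomp Require Import all_boot all_order all_algebra.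
From mathcomp Require Import mpoly.
From mathcomp Require Import fingroup perm.
Import Order.TTheory GRing.Theory Num.Theory.
Local Open Scope ring_scope.

(* Put G := g f. The torus element [lam w t] is diagonal on states: the
   coefficient of [lam w t] G on a state S is [t ^ (- swt w S)] times that of G.
   An upper-triangular [h] sends [x_i] to a combination of [x_j], [j <= i], so it
   only raises weights; hence it acts triangularly on states, for the order by
   [swt w], with nonzero diagonal entries. The coefficient of a state C in
   [h (lam w t G)_{>= N}] is therefore a Laurent polynomial in [t] which is
   - zero when [swt w C < N];
   - nonzero when [G C != 0], its [t ^ (- swt w C)] coefficient being [G C h_CC];
   - zero when [G C = 0]: without truncation it is the coefficient polynomial of
     C evaluated at [h (lam w t) g], which vanishes identically because
     [g \in U(f)], and truncation keeps or kills whole monomials in [t].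
   Avoiding the finitely many roots of the nonzero ones gives the theorem. *)

Definition ksubset (T : finType) (r : nat) := {S : {set T} | #|S| == r}.

Section CauchyBinet.
Context {R : comNzRingType} {T : finType} {r : nat}.
Local Notation ksubset := (ksubset T r).

Definition kenum (S : ksubset) (j : 'I_r) : T :=
  enum_val (cast_ord (esym (eqP (valP S))) j).

Lemma kenum_mem (S : ksubset) j : kenum S j \in val S.
Proof. exact: enum_valP. Qed.

Lemma kenum_inj (S : ksubset) : injective (kenum S).
Proof. by move=> i j /enum_val_inj /cast_ord_inj. Qed.

Lemma kenumP (S : ksubset) x : x \in val S -> exists j, kenum S j = x.
Proof.
move=> Sx; exists (cast_ord (eqP (valP S)) (enum_rank_in Sx x)).
by rewrite /kenum cast_ordK enum_rankK_in.
Qed.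

Lemma kenum_imset (S : ksubset) : val S = [set kenum S j | j in 'I_r].
Proof.
apply/setP => x; apply/idP/imsetP => [/kenumP[j <-]|[j _ ->]].
  by exists j.
exact: kenum_mem.
Qed.

Lemma det_mul_expand (A : 'I_r -> T -> R) (B : T -> 'I_r -> R) :
  \det (\matrix_(i, j) \sum_x A i x * B x j) =
  \sum_(phi : {ffun 'I_r -> T})
     (\prod_i A i (phi i)) * \det (\matrix_(i, j) B (phi i) j).
Proof.
rewrite /determinant.
have expand_term (s : 'S_r) :
    (-1) ^+ s * \prod_i (\matrix_(i, j) \sum_x A i x * B x j) i (s i)
  = \sum_(phi : {ffun 'I_r -> T}) (-1) ^+ s * \prod_i (A i (phi i) * B (phi i) (s i)).
  rewrite -mulr_sumr; congr (_ * _).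
  rewrite (eq_bigr (fun i => \sum_x A i x * B x (s i))) => [|i _]; last by rewrite mxE.
  by rewrite bigA_distr_bigA.
rewrite (eq_bigr _ (fun s _ => expand_term s)) exchange_big /=.
apply: eq_bigr => phi _; rewrite mulr_sumr; apply: eq_bigr => s _.
rewrite big_split /= mulrCA; congr (_ * (_ * _)).
by apply: eq_bigr => i _; rewrite mxE.
Qed.

Definition kenum_perm (p : ksubset * 'S_r) : {ffun 'I_r -> T} :=
  [ffun i => kenum p.1 (p.2 i)].

Lemma kenum_perm_inj : injective kenum_perm.
Proof.
move=> [S s] [S' s'] /= E.
have eq_kenum i : kenum S (s i) = kenum S' (s' i).
  by have := congr1 (fun f : {ffun 'I_r -> T} => f i) E; rewrite !ffunE.
have ES : S = S'.
  apply/val_inj/eqP; rewrite eqEcard (eqP (valP S)) (eqP (valP S')) leqnn andbT.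
  apply/subsetP => _ /kenumP[j <-].
  by rewrite -(permKV s j) eq_kenum kenum_mem.
subst S'; congr (_, _); apply/permP => i; exact: kenum_inj (eq_kenum i).
Qed.

Lemma injective_ffun_kenum_perm (phi : {ffun 'I_r -> T}) :
  injective phi -> exists p, kenum_perm p = phi.
Proof.
move=> phiI.
have cardS : #|[set phi i | i in 'I_r]| == r by rewrite card_imset // card_ord.
pose S : ksubset := exist (fun X : {set T} => #|X| == r) _ cardS.
have Sphi i : phi i \in val S by apply: imset_f.
pose s i := cast_ord (eqP (valP S)) (enum_rank_in (Sphi i) (phi i)).
have kenum_s i : kenum S (s i) = phi i.
  by rewrite /kenum /s cast_ordK enum_rankK_in.
have sI : injective s by move=> i j E; apply: phiI; rewrite -kenum_s E kenum_s.
by exists (S, perm sI); apply/ffunP => i; rewrite ffunE /= permE kenum_s.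
Qed.

Lemma cauchy_binet (A : 'I_r -> T -> R) (B : T -> 'I_r -> R) :
  \det (\matrix_(i, j) \sum_x A i x * B x j) =
  \sum_(S : ksubset) \det (\matrix_(i, j) A i (kenum S j)) *
                     \det (\matrix_(i, j) B (kenum S i) j).
Proof.
pose H (phi : {ffun 'I_r -> T}) :=
  (\prod_i A i (phi i)) * \det (\matrix_(i, j) B (phi i) j).
rewrite det_mul_expand (bigID (mem [set kenum_perm p | p in predT])) /=.
(* a non-injective [phi] repeats a row of [B], so its term vanishes *)
rewrite [X in _ + X]big1 ?addr0 => [|phi phiNim]; last first.
  case: (boolP (injectiveb phi)) => [/injectiveP/injective_ffun_kenum_perm[p Ep]|].
    by rewrite -Ep imset_f in phiNim.
  move=> /injectivePn[i [j ij Eij]].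
  by rewrite (determinant_alternate ij) ?mulr0 // => k; rewrite !mxE Eij.
rewrite (big_imset H) /=; last by move=> p q _ _; apply: kenum_perm_inj.
transitivity (\sum_(S : ksubset) \sum_(s : 'S_r) H (kenum_perm (S, s))).
  by rewrite pair_big; apply: eq_bigl => p.
apply: eq_bigr => S _; rewrite [in RHS]/determinant mulr_suml.
apply: eq_bigr => s _; rewrite /H.
have -> : \matrix_(i, j) B (kenum_perm (S, s) i) j =
          row_perm s (\matrix_(i, j) B (kenum S i) j).
  by apply/matrixP => i j; rewrite !mxE ffunE.
rewrite row_permE det_mulmx det_perm mulrCA mulrA; congr (_ * _ * _).
by apply: eq_bigr => i _; rewrite !mxE ffunE.
Qed.

End CauchyBinet.

Section Action.
Context {R : comNzRingType} {n : nat}.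
Implicit Types (M : 'M[R]_n.+1) (p : {mpoly R[n.+1]}).

Definition act_var M (i : 'I_n.+1) : {mpoly R[n.+1]} := \sum_(j < n.+1) M j i *: 'X_j.

Lemma actX M A : act M 'X_[A] = \prod_i act_var M i ^+ A i.
Proof. by rewrite /act comp_mpolyX; apply: eq_bigr => i _; rewrite tnth_mktuple. Qed.

Lemma act_mpolyE M p : act M p = \sum_(A <- msupp p) p@_A *: act M 'X_[A].
Proof. exact: comp_mpolyEX. Qed.

Lemma actXU M i : act M 'X_i = act_var M i.
Proof. by rewrite /act comp_mpolyXU -(tnth_nth 0) tnth_mktuple. Qed.

Lemma actZ M c p : act M (c *: p) = c *: act M p.
Proof. exact: linearZ. Qed.

Lemma act_sum M (I : Type) (s : seq I) (P : pred I) (F : I -> {mpoly R[n.+1]}) :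
  act M (\sum_(i <- s | P i) F i) = \sum_(i <- s | P i) act M (F i).
Proof. exact: raddf_sum. Qed.

Lemma act_prod M (I : Type) (s : seq I) (P : pred I) (F : I -> {mpoly R[n.+1]}) :
  act M (\prod_(i <- s | P i) F i) = \prod_(i <- s | P i) act M (F i).
Proof. exact: rmorph_prod. Qed.

Lemma actXn M p k : act M (p ^+ k) = act M p ^+ k.
Proof. exact: rmorphXn. Qed.

Lemma act_var_mul M M' i : act M (act_var M' i) = act_var (M *m M') i.
Proof.
rewrite /act_var act_sum.
under eq_bigr => j _ do rewrite actZ actXU /act_var scaler_sumr.
rewrite exchange_big /=; apply: eq_bigr => l _.
rewrite mxE scaler_suml; apply: eq_bigr => j _.
by rewrite scalerA mulrC.
Qed.

Lemma act_mul M M' p : act M (act M' p) = act (M *m M') p.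
Proof.
rewrite (act_mpolyE M') act_sum (act_mpolyE (M *m M')); apply: eq_bigr => A _.
rewrite actZ !actX act_prod; congr (_ *: _); apply: eq_bigr => i _.
by rewrite actXn act_var_mul.
Qed.

Lemma act_var_homog M i : act_var M i \is 1.-homog.
Proof.
apply: rpred_sum => j _; apply: dhomogZ; rewrite dhomogX; exact/eqP/mdeg1.
Qed.

Lemma actX_homog M A : act M 'X_[A] \is (mdeg A).-homog.
Proof.
rewrite actX mdegE.
apply: (big_ind2 (fun (x : {mpoly R[n.+1]}) (d : nat) => x \is d.-homog)).
- exact: dhomog1.
- by move=> x1 x2 y1 y2; apply: dhomogM.
- by move=> i _; have := dhomogMn (A i) (act_var_homog M i); rewrite mul1n.
Qed.

Lemma act_homog M p d : p \is d.-homog -> act M p \is d.-homog.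
Proof.
move=> hp; rewrite act_mpolyE big_seq; apply: rpred_sum => A pA; apply: dhomogZ.
rewrite -(dhomog_mf hp pA); exact: actX_homog.
Qed.

End Action.

Lemma map_mpoly_act (R S : comNzRingType) n (phi : {rmorphism R -> S})
  (M : 'M[R]_n.+1) (p : {mpoly R[n.+1]}) :
  map_mpoly phi (act M p) = act (map_mx phi M) (map_mpoly phi p).
Proof.
rewrite act_mpolyE raddf_sum [in RHS](mpolyE p) raddf_sum act_sum.
apply: eq_bigr => A _ /=; rewrite !map_mpolyZ map_mpolyX actZ; congr (_ *: _).
rewrite !actX rmorph_prod; apply: eq_bigr => i _; rewrite rmorphXn.
congr (_ ^+ _); rewrite /act_var raddf_sum; apply: eq_bigr => j _ /=.
by rewrite map_mpolyZ map_mpolyX mxE.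
Qed.

Lemma coefpoly_meval (K : fieldType) n m r (f : 'I_r -> {mpoly K[n.+1]})
  (M : 'M[K]_n.+1) S :
  (coefpoly m f S).@[fun k => mxvec M 0 k] = wedge m (fun i => act M (f i)) S.
Proof.
rewrite /coefpoly /wedge -det_map_mx; congr (\det _); apply/matrixP => i j.
rewrite !mxE -mcoeff_map_mpoly map_mpoly_act.
have -> : map_mx (meval (fun k => mxvec M 0 k)) (Defs.genmx K n) = M.
  by apply/matrixP => a b; rewrite !mxE mevalXU mxvecE.
congr (mcoeff _ (act _ _)); apply/mpolyP => D.
by rewrite !mcoeff_map_mpoly /= mevalC.
Qed.

Section Monomials.
Context {n m : nat}.

Lemma mnm_ofE (B : mon n m) i : mnm_of B i = val B i.
Proof. exact: mnmE. Qed.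

Lemma mnm_of_inj : injective (@mnm_of n m).
Proof.
move=> B B' /mnmP E; apply/val_inj/ffunP => i; apply/val_inj.
by have := E i; rewrite !mnm_ofE.
Qed.

Lemma mnm_of_onto (A : 'X_{1..n.+1}) : mdeg A = m -> exists B : mon n m, mnm_of B = A.
Proof.
move=> dA.
have leAm i : (A i < m.+1)%N by rewrite ltnS -dA mdegE (bigD1 i) //= leq_addr.
pose B : {ffun 'I_n.+1 -> 'I_m.+1} := [ffun i => Ordinal (leAm i)].
have sumB : (\sum_i (B i : nat) == m)%N.
  by apply/eqP; under eq_bigr do rewrite ffunE /=; rewrite -mdegE.
by exists (exist _ B sumB); apply/mnmP => i; rewrite mnm_ofE /= ffunE.
Qed.

End Monomials.

Lemma mcoeff_act_homog (R : comNzRingType) n m (M : 'M[R]_n.+1)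
  (q : {mpoly R[n.+1]}) D : q \is m.-homog ->
  (act M q)@_D = \sum_(B : mon n m) q@_(mnm_of B) * (act M 'X_[mnm_of B])@_D.
Proof.
move=> hq; rewrite {1}act_mpolyE raddf_sum /=.
under eq_bigr do rewrite mcoeffZ.
symmetry; rewrite (bigID (fun B : mon n m => mnm_of B \in msupp q)) /=.
rewrite [X in _ + X]big1 ?addr0 => [|B]; last by rewrite mcoeff_msupp negbK => /eqP ->; rewrite mul0r.
rewrite -big_filter -(big_map (@mnm_of n m) xpredT (fun A => q@_A * (act M 'X_[A])@_D)).
apply/perm_big/uniq_perm => [||A].
- by rewrite map_inj_uniq ?filter_uniq ?index_enum_uniq //; apply: mnm_of_inj.
- exact: msupp_uniq.
apply/mapP/idP => [[B]|qA]; first by rewrite mem_filter => /andP[qB _] ->.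
have [B EB] := mnm_of_onto A (dhomog_mf hq qA).
by exists B => //; rewrite mem_filter EB qA mem_index_enum.
Qed.

Definition act_state {R : comNzRingType} {n m r : nat} (M : 'M[R]_n.+1)
  (S : state n m r) : ext R n m r :=
  wedge m (fun i => act M 'X_[mnm_of (st_mon S i)]).

Lemma act_ext_wedge (R : comNzRingType) n m r (M : 'M[R]_n.+1)
  (p : 'I_r -> {mpoly R[n.+1]}) C : (forall i, p i \is m.-homog) ->
  act_ext M (wedge m p) C = wedge m (fun i => act M (p i)) C.
Proof.
move=> hp; rewrite /act_ext [in RHS]/wedge.
under eq_mx => i j do rewrite (mcoeff_act_homog _ _ _ _ _ _ (hp i)).
by rewrite (cauchy_binet (fun i B => (p i)@_(mnm_of B))
          (fun B j => (act M 'X_[mnm_of B])@_(mnm_of (st_mon C j)))).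
Qed.

Lemma swt_st_mon n m r (w : 'I_n.+1 -> int) (S : state n m r) :
  swt w S = \sum_(j < r) mwt w (mnm_of (st_mon S j)).
Proof. by rewrite /swt (kenum_imset S) big_imset // => i j _ _ /kenum_inj. Qed.

Lemma sum_mul_indicator (T : eqType) (R : nzRingType) (s : seq T) (F : T -> R) x :
  uniq s -> \sum_(a <- s) F a * (a == x)%:R = if x \in s then F x else 0.
Proof.
elim: s => [|a s IH] //=; first by rewrite big_nil.
move=> /andP[as' us]; rewrite big_cons IH // in_cons.
have [<-|ax] := eqVneq a x; last by rewrite mulr0 add0r.
by rewrite (negbTE as') mulr1 addr0.
Qed.

Section Torus.
Variables (K : fieldType) (n : nat) (w : 'I_n.+1 -> int) (t : K).
Hypothesis t_neq0 : t != 0.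

Lemma prod_expfz (I : Type) (s : seq I) (F : I -> int) :
  \prod_(i <- s) t ^ F i = t ^ (\sum_(i <- s) F i).
Proof.
elim: s => [|a s IH]; first by rewrite !big_nil expr0z.
by rewrite !big_cons IH expfzDr.
Qed.

Lemma act_var_lam i : act_var (lam w t) i = t ^ (- w i) *: 'X_i.
Proof.
rewrite /act_var (bigD1 i) //= big1 ?addr0 => [|j ji].
  by rewrite !mxE eqxx mulr1n.
by rewrite !mxE (negbTE ji) mulr0n scale0r.
Qed.

Lemma act_lamX A : act (lam w t) 'X_[A] = t ^ (- mwt w A) *: 'X_[A].
Proof.
rewrite actX; under eq_bigr do rewrite act_var_lam exprZn.
rewrite scaler_prod -mpolyXE_id /mwt -sumrN -prod_expfz; congr (_ *: _).
apply: eq_bigr => i _.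
have -> : (t ^ (- w i)) ^+ A i = (t ^ (- w i)) ^ (A i)%:Z by [].
by rewrite exprz_exp mulNr.
Qed.

Lemma mcoeff_act_lam (q : {mpoly K[n.+1]}) D :
  (act (lam w t) q)@_D = t ^ (- mwt w D) * q@_D.
Proof.
rewrite act_mpolyE raddf_sum /=.
under eq_bigr do rewrite act_lamX scalerA mcoeffZ mcoeffX.
rewrite (@sum_mul_indicator _ _ _ (fun A => q@_A * t ^ (- mwt w A))) ?msupp_uniq //.
by rewrite mcoeff_msupp; case: eqP => [->|_]; rewrite ?mulr0 // mulrC.
Qed.

Lemma wedge_act_lam m r (q : 'I_r -> {mpoly K[n.+1]}) S :
  wedge m (fun i => act (lam w t) (q i)) S = t ^ (- swt w S) * wedge m q S.
Proof.
rewrite /wedge.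
have -> : \matrix_(i, j) (act (lam w t) (q i))@_(mnm_of (st_mon S j)) =
  (\matrix_(i, j) (q i)@_(mnm_of (st_mon S j))) *m
     diag_mx (\row_j t ^ (- mwt w (mnm_of (st_mon S j)))).
  by rewrite mul_mx_diag; apply/matrixP => i j; rewrite !mxE mcoeff_act_lam mulrC.
rewrite det_mulmx det_diag mulrC swt_st_mon -sumrN -prod_expfz; congr (_ * _).
by apply: eq_bigr => j _; rewrite mxE.
Qed.

End Torus.

Section WeightOrder.
Variables (K : fieldType) (n : nat) (w : 'I_n.+1 -> int).
Implicit Types (p q e : {mpoly K[n.+1]}) (A B D : 'X_{1..n.+1}).

Lemma mwtD A B : mwt w (A + B)%MM = mwt w A + mwt w B.
Proof. by rewrite /mwt -big_split; apply: eq_bigr => i _; rewrite mnmDE PoszD mulrDr. Qed.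

Lemma mwtU j : mwt w U_(j)%MM = w j.
Proof.
rewrite /mwt (bigD1 j) //= big1 ?addr0 => [|i ij]; first by rewrite mnm1E eqxx mulr1.
by rewrite mnm1E eq_sym (negbTE ij) mulr0.
Qed.

Definition wt_gt k q := forall D, D \in msupp q -> k < mwt w D.
Definition wt_ge k q := forall D, D \in msupp q -> k <= mwt w D.

Lemma wt_gt0 k : wt_gt k 0.
Proof. by move=> D; rewrite msupp0. Qed.

Lemma wt_gtD k p q : wt_gt k p -> wt_gt k q -> wt_gt k (p + q).
Proof. by move=> hp hq D /msuppD_le; rewrite mem_cat => /orP[/hp|/hq]. Qed.

Lemma wt_geD k p q : wt_ge k p -> wt_ge k q -> wt_ge k (p + q).
Proof. by move=> hp hq D /msuppD_le; rewrite mem_cat => /orP[/hp|/hq]. Qed.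

Lemma wt_gtW k q : wt_gt k q -> wt_ge k q.
Proof. by move=> hq D /hq /ltW. Qed.

Lemma wt_geZX c A : wt_ge (mwt w A) (c *: 'X_[A]).
Proof. by move=> D /msuppZ_le; rewrite msuppX inE => /eqP ->. Qed.

Lemma wt_ge_gtM {k1 k2 p q} : wt_ge k1 p -> wt_gt k2 q -> wt_gt (k1 + k2) (p * q).
Proof.
move=> hp hq D /msuppM_le /allpairsP [[m1 m2] [/= p1 q2 ->]].
by rewrite mwtD ler_ltD ?hp ?hq.
Qed.

Lemma wt_gt_geM {k1 k2 p q} : wt_gt k1 p -> wt_ge k2 q -> wt_gt (k1 + k2) (p * q).
Proof.
move=> hp hq D /msuppM_le /allpairsP [[m1 m2] [/= p1 q2 ->]].
by rewrite mwtD ltr_leD ?hp ?hq.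
Qed.

Definition lead_term A c q := exists2 e, q = c *: 'X_[A] + e & wt_gt (mwt w A) e.

Lemma lead_term_wt_ge {A c q} : lead_term A c q -> wt_ge (mwt w A) q.
Proof. by case=> e -> he; apply: wt_geD; [apply: wt_geZX | apply: wt_gtW]. Qed.

Lemma lead_term1 : lead_term 0%MM 1 1.
Proof. by exists 0; rewrite ?addr0 ?scale1r ?mpolyX0 //; apply: wt_gt0. Qed.

Lemma lead_termM {A B c d p q} :
  lead_term A c p -> lead_term B d q -> lead_term (A + B)%MM (c * d) (p * q).
Proof.
move=> hp hq; have q_ge := lead_term_wt_ge hq.
case: hp => e -> he; case: hq => e' Eq he'.
exists (c *: 'X_[A] * e' + e * q).
  rewrite Eq mulrDl mulrDr addrA mpolyXD -scalerAl -scalerAr scalerA.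
  by rewrite -Eq.
rewrite mwtD; apply: wt_gtD; first exact: wt_ge_gtM (wt_geZX _ _) he'.
exact: wt_gt_geM he q_ge.
Qed.

Lemma lead_term_prod (I : Type) (s : seq I) (B : I -> 'X_{1..n.+1}) (c : I -> K)
  (p : I -> {mpoly K[n.+1]}) : (forall i, lead_term (B i) (c i) (p i)) ->
  lead_term (\sum_(i <- s) B i)%MM (\prod_(i <- s) c i) (\prod_(i <- s) p i).
Proof.
move=> hB; elim: s => [|a s IH]; first by rewrite !big_nil; apply: lead_term1.
by rewrite !big_cons; apply: lead_termM.
Qed.

Lemma lead_termX {A c p} k : lead_term A c p -> lead_term (A *+ k)%MM (c ^+ k) (p ^+ k).
Proof.
move=> hp; elim: k => [|k IH]; first by rewrite mulm0n !expr0; apply: lead_term1.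
by rewrite mulmS !exprS; apply: lead_termM.
Qed.

Variable h : 'M[K]_n.+1.
Hypothesis w_decr : forall i j : 'I_n.+1, (i < j)%N -> w j < w i.
Hypothesis h_upper : forall i j : 'I_n.+1, (j < i)%N -> h i j = 0.

Lemma lead_term_act_var i : lead_term U_(i)%MM (h i i) (act_var h i).
Proof.
exists (\sum_(j | j != i) h j i *: 'X_j); first by rewrite /act_var (bigD1 i).
apply: (big_ind (wt_gt _)); [exact: wt_gt0 | exact: wt_gtD |] => j ji.
have [->|hji_neq0] := eqVneq (h j i) 0; first by rewrite scale0r; apply: wt_gt0.
move=> D /msuppZ_le; rewrite msuppX inE => /eqP ->; rewrite !mwtU; apply: w_decr.
rewrite ltn_neqAle val_eqE ji leqNgt /=; apply: contra hji_neq0 => /h_upper ->.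
by rewrite eqxx.
Qed.

Lemma lead_term_actX A : lead_term A (\prod_i h i i ^+ A i) (act h 'X_[A]).
Proof.
rewrite actX {1}(multinomUE_id A).
exact: lead_term_prod (fun i => lead_termX _ (lead_term_act_var i)).
Qed.

Lemma mcoeff_act_upperX A D : (act h 'X_[A])@_D != 0 -> D = A \/ mwt w A < mwt w D.
Proof.
case: (lead_term_actX A) => e -> he; rewrite mcoeffD mcoeffZ mcoeffX.
have [->|AD] := eqVneq A D; first by left.
by rewrite mulr0 add0r -mcoeff_msupp => /he; right.
Qed.

Lemma mcoeff_act_upperX_diag A : (act h 'X_[A])@_A = \prod_i h i i ^+ A i.
Proof.
case: (lead_term_actX A) => e -> he; rewrite mcoeffD mcoeffZ mcoeffX eqxx mulr1.
suff -> : e@_A = 0 by rewrite addr0.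
by apply/eqP; rewrite mcoeff_eq0; apply/negP => /he; rewrite ltxx.
Qed.

End WeightOrder.

Lemma det_neq0_perm_term (R : comNzRingType) r (M : 'M[R]_r) :
  \det M != 0 -> exists s : 'S_r, \prod_i M i (s i) != 0.
Proof.
move=> det_neq0; apply/existsP; apply: contraNT det_neq0 => /existsPn noterm.
apply/eqP/big1 => s _; have := noterm s; rewrite negbK => /eqP ->.
by rewrite mulr0.
Qed.

Section UpperTriangularStates.
Context {K : fieldType} {n m r : nat} {w : 'I_n.+1 -> int} {h : 'M[K]_n.+1}.
Hypothesis w_decr : forall i j : 'I_n.+1, (i < j)%N -> w j < w i.
Hypothesis h_upper : forall i j : 'I_n.+1, (j < i)%N -> h i j = 0.
Implicit Types (S C : state n m r).
Local Notation mS S i := (mnm_of (st_mon S i)).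

Lemma perm_term_swt S C (s : 'S_r) :
  \prod_i (act h 'X_[mS S i])@_(mS C (s i)) != 0 ->
  (forall i, mwt w (mS S i) <= mwt w (mS C (s i))) /\
  (swt w S = swt w C -> forall i, st_mon C (s i) = st_mon S i).
Proof.
move=> /prodf_neq0 term_neq0.
have step i := @mcoeff_act_upperX K n w h w_decr h_upper _ _ (term_neq0 i isT).
have le_i i : mwt w (mS S i) <= mwt w (mS C (s i)).
  by case: (step i) => [->|/ltW].
split=> // eq_swt i.
have sum_C : \sum_i mwt w (mS C (s i)) = swt w C.
  by rewrite swt_st_mon [RHS](reindex_inj (@perm_inj _ s)).
have : \sum_i (mwt w (mS C (s i)) - mwt w (mS S i)) = 0.
  by rewrite sumrB sum_C -swt_st_mon eq_swt subrr.
have ge0 j (_ : true) : 0 <= mwt w (mS C (s j)) - mwt w (mS S j) by rewrite subr_ge0.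
move=> /(psumr_eq0P ge0)/(_ i isT)/eqP; rewrite subr_eq0 => /eqP eq_i.
by apply: mnm_of_inj; case: (step i) => //; rewrite eq_i ltxx.
Qed.

Lemma act_state_swt S C : act_state h S C != 0 ->
  swt w S <= swt w C /\ (swt w S = swt w C -> S = C).
Proof.
move=> /det_neq0_perm_term[s]; under eq_bigr do rewrite mxE.
move=> /perm_term_swt[le_i eq_i]; split.
  rewrite !swt_st_mon [X in _ <= X](reindex_inj (@perm_inj _ s)) /=.
  by apply: ler_sum => i _; apply: le_i.
move=> /eq_i eq_mon; apply/val_inj/eqP.
rewrite eqEcard (eqP (valP S)) (eqP (valP C)) leqnn andbT.
by apply/subsetP => _ /kenumP[i <-]; rewrite -[kenum S i]/(st_mon S i) -eq_mon kenum_mem.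
Qed.

Lemma act_state_diag_neq0 : (forall i, h i i != 0) -> forall C, act_state h C C != 0.
Proof.
move=> h_diag C; rewrite /act_state /wedge /determinant (bigD1 1%g) //=.
rewrite [X in _ + X]big1 ?addr0 => [|s s_neq1].
  rewrite odd_perm1 expr0 mul1r; apply/prodf_neq0 => i _.
  rewrite mxE perm1 (@mcoeff_act_upperX_diag K n w h w_decr h_upper); apply/prodf_neq0 => k _.
  by rewrite expf_neq0.
have [term0|/perm_term_swt[_ eq_i]] := eqVneq (\prod_i (act h 'X_[mS C i])@_(mS C (s i))) 0.
  by under eq_bigr do rewrite mxE; rewrite term0 mulr0.
case/eqP: s_neq1; apply/permP => i; rewrite perm1.
by apply: (@kenum_inj _ _ C); apply: eq_i.
Qed.

End UpperTriangularStates.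

Section CharZero.
Context {K : fieldType}.
Hypothesis K_char0 : [pchar K] =i pred0.

Lemma natf_inj_pchar0 : injective (fun k : nat => k%:R : K).
Proof.
suff le_inj i j : (i <= j)%N -> (i%:R : K) = j%:R -> i = j.
  move=> i j /= eq_ij.
  by case/orP: (leq_total i j) => [/le_inj/(_ eq_ij)|/le_inj/(_ (esym eq_ij))] ->.
move=> le_ij eq_ij; apply/eqP; rewrite eqn_leq le_ij -subn_eq0 /=.
have char0 := (pcharf0P K).1 K_char0.
by rewrite -char0 natrB // eq_ij subrr.
Qed.

Lemma poly_eq0_on_units (p : {poly K}) : (forall t, t != 0 -> p.[t] = 0) -> p = 0.
Proof.
move=> p_vanish; apply/eqP; apply: contraT => p_neq0.
have := max_poly_roots p_neq0 (rs := [seq i.+1%:R | i <- iota 0 (size p)]).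
rewrite size_map size_iota ltnn; apply.
  apply/allP => _ /mapP[i _ ->]; apply/eqP/p_vanish.
  by rewrite ((pcharf0P K).1 K_char0).
by rewrite map_inj_uniq ?iota_uniq // => i j /natf_inj_pchar0 [].
Qed.

End CharZero.

Section TriangularTruncation.
Context {K : closedFieldType} {T : finType} {wt : T -> int} {a : T -> T -> K} {G : T -> K}.
Hypothesis K_char0 : [pchar K] =i pred0.
Hypothesis a_upper : forall S C, a S C != 0 -> wt S <= wt C /\ (wt S = wt C -> S = C).
Hypothesis a_diag : forall C, a C C != 0.
Hypothesis full_vanish :
  forall {C t}, G C = 0 -> t != 0 -> \sum_S t ^ (- wt S) * G S * a S C = 0.

(* Multiplying by [t ^ bound] turns the Laurent polynomials in [t] below into
   polynomials: [t ^ (- wt S)] becomes [t ^ shift S]. *)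
Let bound : int := \sum_S (`|wt S|%N : int).
Let shift S : nat := `|bound - wt S|%N.

Lemma norm_wt_le_bound S : `|wt S| <= bound.
Proof.
rewrite /bound (bigD1 S) //= -[X in X <= _]addr0 abszE lerD ?sumr_ge0 //.
Qed.

Lemma shiftE S : (shift S : int) = bound - wt S.
Proof.
rewrite /shift gez0_abs // subr_ge0; apply: le_trans (norm_wt_le_bound S).
exact: ler_norm.
Qed.

Definition laurent_poly (N : int) C : {poly K} :=
  \sum_S (if N <= wt S then G S * a S C else 0) *: 'X^(shift S).

Lemma horner_laurent_poly N C t : t != 0 ->
  t ^ (- bound) * (laurent_poly N C).[t] =
  \sum_S (if N <= wt S then t ^ (- wt S) * G S else 0) * a S C.
Proof.
move=> t_neq0; rewrite horner_sum mulr_sumr; apply: eq_bigr => S _.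
rewrite hornerZ hornerXn; case: ifP => _; last by rewrite !mul0r mulr0.
rewrite exprnP shiftE mulrCA -expfzDr // addrA addNr add0r.
by rewrite mulrC mulrA.
Qed.

Lemma wt_shift S : wt S = bound - (shift S)%:Z.
Proof. by rewrite shiftE opprB addrC subrK. Qed.

Lemma coef_laurent_poly N C j :
  (laurent_poly N C)`_j = if N <= bound - j%:Z then (laurent_poly (- bound) C)`_j else 0.
Proof.
rewrite !coef_sumMXn; case: ifP => le_N.
  apply: eq_bigr => S /eqP eq_j; rewrite [in LHS]wt_shift eq_j le_N.
  by rewrite lerNnormlW ?norm_wt_le_bound.
by apply: big1 => S /eqP eq_j; rewrite wt_shift eq_j le_N.
Qed.

Lemma laurent_poly_neq0 N C : N <= wt C -> G C != 0 -> laurent_poly N C != 0.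
Proof.
move=> le_N GC_neq0; apply/eqP => /polyP/(_ (shift C)).
rewrite coef0 coef_sumMXn (bigD1 C) //= le_N big1 ?addr0 => [/eqP|S].
  by apply/negP; rewrite mulf_neq0.
move=> /andP[/eqP eq_shift S_neq_C]; case: ifP => // _.
suff -> : a S C = 0 by rewrite mulr0.
apply/eqP; apply: contraNT S_neq_C => /a_upper[_ eq_wt].
by rewrite eq_wt // !wt_shift eq_shift.
Qed.

Lemma laurent_poly_low N C : wt C < N -> laurent_poly N C = 0.
Proof.
move=> lt_N; apply: big1 => S _; case: ifP => le_N; last by rewrite scale0r.
suff -> : a S C = 0 by rewrite mulr0 scale0r.
apply/eqP; apply: contraTT lt_N => /a_upper[le_wt _].
by rewrite -leNgt (le_trans le_N le_wt).
Qed.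

Lemma laurent_poly_vanish N C : G C = 0 -> laurent_poly N C = 0.
Proof.
move=> GC0.
have full0 : laurent_poly (- bound) C = 0.
  apply: (poly_eq0_on_units K_char0) => t t_neq0.
  apply/(mulfI (expfz_neq0 (- bound) t_neq0)).
  rewrite mulr0 horner_laurent_poly // -[RHS](full_vanish GC0 t_neq0).
  by apply: eq_bigr => S _; rewrite lerNnormlW ?norm_wt_le_bound // mulrA.
by apply/polyP => j; rewrite coef_laurent_poly full0 coef0; case: ifP.
Qed.

Lemma truncated_sum_supp N : exists s : seq K, forall t, t != 0 -> t \notin s ->
  forall C, (\sum_S (if N <= wt S then t ^ (- wt S) * G S else 0) * a S C != 0) =
            (N <= wt C) && (G C != 0).
Proof.
pose Q := \prod_(C | (N <= wt C) && (G C != 0)) laurent_poly N C.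
have Q_neq0 : Q != 0 by apply/prodf_neq0 => C /andP[]; apply: laurent_poly_neq0.
have [rs Qrs] := closed_field_poly_normal Q.
exists rs => t t_neq0 t_notin C.
have Qt_neq0 : Q.[t] != 0.
  rewrite Qrs hornerZ mulf_neq0 ?lead_coef_eq0 //.
  rewrite horner_prod prodf_seq_neq0.
  by apply/allP => z z_in; rewrite hornerXsubC subr_eq0; apply: contraNneq t_notin => ->.
rewrite -horner_laurent_poly // mulf_eq0 negb_or expfz_neq0 //=.
have [lt_N|le_N] := ltP (wt C) N.
  by rewrite laurent_poly_low // horner0 eqxx.
have [GC0|GC_neq0] := eqVneq (G C) 0.
  by rewrite laurent_poly_vanish // horner0 eqxx andbF.
apply: contra Qt_neq0 => /eqP QC.
by rewrite horner_prod; apply/prodf_eq0; exists C; rewrite ?le_N ?GC_neq0 ?QC.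
Qed.

End TriangularTruncation.

Lemma upper_unitmx_diag_neq0 {K : fieldType} {n} {h : 'M[K]_n.+1} :
  h \in unitmx -> (forall i j : 'I_n.+1, (j < i)%N -> h i j = 0) ->
  forall i, h i i != 0.
Proof.
move=> h_unit h_upper i; apply: contraTneq h_unit => hii0.
rewrite unitmxE unitfE negbK -det_tr det_trig; last first.
  by apply/is_trig_mxP => k l lt_lk; rewrite mxE h_upper.
by apply/prodf_eq0; exists i; rewrite // mxE hii0.
Qed.

Lemma meval_coefpoly_mul_lam (K : fieldType) n m r (f : 'I_r -> {mpoly K[n.+1]})
  (w : 'I_n.+1 -> int) (h g : 'M[K]_n.+1) (t : K) C :
  (forall i, f i \is m.-homog) -> t != 0 ->
  (coefpoly m f C).@[fun k => mxvec (h *m (lam w t *m g)) 0 k] =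
  \sum_S t ^ (- swt w S) * wedge m (fun i => act g (f i)) S * act_state h S C.
Proof.
move=> f_homog t_neq0; rewrite coefpoly_meval.
transitivity (wedge m (fun i => act h (act (lam w t) (act g (f i)))) C).
  by congr (\det _); apply/matrixP => i j; rewrite !mxE !act_mul mulmxA.
rewrite -act_ext_wedge => [|i]; last by rewrite !act_homog.
by apply: eq_bigr => S _; rewrite wedge_act_lam.
Qed.

Theorem mainTheorem9 (K : closedFieldType) (n m r : nat)
  (Kchar0 : [pchar K] =i pred0)
  (f : 'I_r -> {mpoly K[n.+1]}) (hf : forall i, f i \is m.-homog)
  (w : 'I_n.+1 -> int)
  (hw : forall i j : 'I_n.+1, (i < j)%N -> w j < w i)
  (hdist : distinguishes w (r * m)%N)
  (h : 'M[K]_n.+1) (hh : h \in unitmx)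
  (hup : forall i j : 'I_n.+1, (j < i)%N -> h i j = 0)
  (g : 'M[K]_n.+1) (hg : inU m f g) (N : int) :
  exists s : seq K, forall t : K, t != 0 -> t \notin s ->
    let F := wedge m (fun i => act (lam w t) (act g (f i))) in
    supp (act_ext h (trunc w N F)) = supp (trunc w N F).
Proof.
pose G := wedge m (fun i => act g (f i)).
have full_vanish C t : G C = 0 -> t != 0 ->
    \sum_S t ^ (- swt w S) * G S * act_state h S C = 0.
  move=> GC0 t_neq0; rewrite -meval_coefpoly_mul_lam //.
  have [_ /(_ C)] := hg; rewrite coefpoly_meval -/(G C) GC0 eqxx.
  by move=> /contraTeq/(_ isT) ->; rewrite meval0.
have [s supp_s] := truncated_sum_supp Kchar0 (act_state_swt hw hup)
  (act_state_diag_neq0 hw hup (upper_unitmx_diag_neq0 hh hup)) full_vanish N.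
exists s => t t_neq0 t_notin F; apply/setP => C; rewrite !inE.
rewrite /F /act_ext /trunc; under eq_bigr => S _ do rewrite wedge_act_lam //.
rewrite (supp_s t t_neq0 t_notin C) wedge_act_lam //.
by case: ifP; rewrite ?eqxx // mulf_eq0 negb_or expfz_neq0.
Qed.
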